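(* Let $G$ be a finite metacyclic group. Then $\epsilon_G(A)$ takes the same value for every minimal kernel $A$ of $G$; i.e. if $A$ is a minimal kernel of $G$ then $\epsilon_G=\epsilon_G(A)$, where $\epsilon_G$ denotes this common value.
   Context: All groups are finite. A (metacyclic) kernel of $G$ is a normal subgroup $A$ such that $A$ and $G/A$ are cyclic; a minimal kernel is a kernel of minimal order. For $A$ cyclic normal of order $m$, $T_G(A)$ is the subgroup of the unit group $\mathcal U_m$ of $\mathbb Z/m\mathbb Z$ formed by the classes $[k]_m$ such that $x\mapsto x^k$ is the restriction to $A$ of an inner automorphism of $G$. For $m\in\mathbb N$ write $m_2$ for the largest power of $2$ dividing $m$ and $m_{2'}=m/m_2$. For cyclic $T\le\mathcal U_m$ let $r$ be the greatest divisor of $m$ such that the image of $T$ in $\mathcal U_{r_{2'}}$ is trivial and its image in $\mathcal U_{r_2}$ is contained in $\{[1],[-1]\}$; then $\epsilon=-1$ if the image of $T$ in $\mathcal U_{r_2}$ is nontrivial and $\epsilon=1$ otherwise. $\epsilon_G(A)$ is this $\epsilon$ for $T=T_G(A)$. *)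

From mathcomp Require Import all_boot all_algebra all_fingroup all_solvable.
Set Implicit Arguments. Unset Strict Implicit. Unset Printing Implicit Defensive.
Local Open Scope group_scope.

Section Kernels.
Variable gT : finGroupType.

Definition is_kernel (G A : {group gT}) : bool :=
  [&& A <| G, cyclic A & cyclic (G / A)].

Definition is_min_kernel (G A : {group gT}) : Prop :=
  is_kernel G A /\ forall B : {group gT}, is_kernel G B -> #|A| <= #|B|.

(* [k]_m with m = #|A| (k read mod m) lies in T_G(A): k is a unit mod m and
   x |-> x^k is the restriction to A of conjugation by some g in G. *)
Definition inT (G A : {group gT}) (k : nat) : bool :=
  coprime k #|A| && [exists g in G, [forall a in A, a ^ g == a ^+ k]].

Definition part2 (n : nat) : nat := n`_2.
Definition part2' (n : nat) : nat := n %/ n`_2.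

(* Condition on a divisor r of m = #|A|: image of T_G(A) in U_{r_2'} trivial
   and image in U_{r_2} contained in {[1],[-1]}. *)
Definition good_div (G A : {group gT}) (r : nat) : bool :=
  [forall k : 'I_#|A|, inT G A k ==>
     ((k == 1 %[mod part2' r]) &&
      ((k == 1 %[mod part2 r]) || (k.+1 == 0 %[mod part2 r])))].

Definition r_of (G A : {group gT}) : nat :=
  \max_(d < #|A|.+1 | (d %| #|A|) && good_div G A d) d.

(* epsilon_G(A) : -1 (encoded false) if the image of T_G(A) in U_{r_2} is
   nontrivial, 1 (encoded true) otherwise. *)
Definition epsilon_is_one (G A : {group gT}) : bool :=
  [forall k : 'I_#|A|, inT G A k ==> (k == 1 %[mod part2 (r_of G A)])].

Definition epsilonG (G A : {group gT}) : int :=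
  if epsilon_is_one G A then 1%Z else (-1)%Z.

End Kernels.

From mathcomp Require Import all_boot all_algebra all_fingroup all_solvable.
From mathcomp Require Import zify.

Set Implicit Arguments. Unset Strict Implicit. Unset Printing Implicit Defensive.

(* Two minimal kernels A and B have the same order m.  If eps_G(A) = -1 then
   4 | m and some g in G acts on A as a |-> a^k with k = 3 mod 4.  If
   eps_G(B) = 1 then 4 | r (lcm(r, 4) is again admissible because every
   element of T_G(B) is odd), so G acts on B = <y> by powers that are 1 mod 4
   and [B, G] <= <y^4>.  Then B/<y^4> is central in G/<y^4> with cyclic
   quotient, so G' <= <y^4>, a group of order m/4; but the commutator
   [a, g] = a^(k-1) of a generator a of A has an order not dividing m/4, as
   k - 1 = 2 mod 4. *)

Lemma part2'E n : 0 < n -> part2' n = n`_2^'.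
Proof. by move=> n_gt0; rewrite /part2' -{1}(partnC 2 n_gt0) mulKn. Qed.

Lemma odd_mod4 k : odd k -> (k == 1 %[mod 4]) || (k.+1 == 0 %[mod 4]).
Proof. move=> k_odd; have: k %% 2 = 1 by rewrite modn2 k_odd. lia. Qed.

Lemma dvdn_mul_quarter m j : 0 < m -> 4 %| m -> (m %| j * (m %/ 4)) = (4 %| j).
Proof.
move=> m_gt0 four_m; rewrite -{1}(divnK four_m) mulnC dvdn_pmul2r //.
by rewrite divn_gt0 // dvdn_leq.
Qed.

Section EpsilonOfKernels.
Variable gT : finGroupType.
Implicit Types (G A B N : {group gT}) (y : gT).
Local Open Scope group_scope.

Lemma good_div1 G A : good_div G A 1.
Proof.
by apply/forall_inP => k _; rewrite /part2 /part2' partn1 divn1 !modn1.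
Qed.

Lemma r_of_max G A d : d %| #|A| -> good_div G A d -> d <= r_of G A.
Proof.
move=> dA good_d; have d_lt : d < #|A|.+1 by rewrite ltnS dvdn_leq.
by rewrite /r_of (bigmax_sup (Ordinal d_lt)) //= dA good_d.
Qed.

Lemma r_of_spec G A : r_of G A %| #|A| /\ good_div G A (r_of G A).
Proof.
have one_lt : 1 < #|A|.+1 by rewrite ltnS cardG_gt0.
rewrite /r_of (bigmax_eq_arg (Ordinal one_lt)) /=; last by rewrite dvd1n good_div1.
by case: arg_maxnP => [|i /andP[-> ->]] //=; rewrite dvd1n good_div1.
Qed.

Lemma inT_odd G A k : 2 %| #|A| -> inT G A k -> odd k.
Proof.
by move=> two_A /andP[co_kA _]; rewrite -coprime2n coprime_sym (coprime_dvdr two_A).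
Qed.

Lemma good_div_lcm4 G A d : d %| #|A| -> 4 %| #|A| -> good_div G A d ->
  good_div G A (lcmn d 4).
Proof.
move=> dA four_A /forall_inP good_d; apply/forall_inP => k Tk.
have /andP[k_1 k_pm1] := good_d k Tk.
have d_gt0 : 0 < d := dvdn_gt0 (cardG_gt0 A) dA.
have lcm_gt0 : 0 < lcmn d 4 by rewrite lcmn_gt0 d_gt0.
rewrite part2'E // partn_lcm // (@part_p'nat _ 4) // lcmn1 -part2'E // k_1 /=.
rewrite /part2 partn_lcm // (@part_pnat_id _ 4) //.
move: k_pm1; rewrite /part2 p_part; case: (logn 2 d) => [|[|l]] k_pm1.
1,2: by rewrite odd_mod4 // (inT_odd (dvdn_trans _ four_A) Tk).
by rewrite (lcmn_idPl _) // !expnS mulnA dvdn_mulr.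
Qed.

Lemma dvd4_r_of G A : 4 %| #|A| -> 4 %| r_of G A.
Proof.
move=> four_A; have [rA good_r] := r_of_spec G A.
have r_gt0 : 0 < r_of G A := dvdn_gt0 (cardG_gt0 A) rA.
have lcmA : lcmn (r_of G A) 4 %| #|A| by rewrite dvdn_lcm rA.
have lcm_le := r_of_max lcmA (good_div_lcm4 rA four_A good_r).
have -> : r_of G A = lcmn (r_of G A) 4.
  by apply/eqP; rewrite eqn_leq lcm_le dvdn_leq ?lcmn_gt0 ?r_gt0 ?dvdn_lcml.
exact: dvdn_lcmr.
Qed.

Lemma not_epsilon_one_witness G A : ~~ epsilon_is_one G A ->
  4 %| #|A| /\ exists2 g, g \in G & exists q, {in A, forall a, a ^ g = a ^+ (q * 4).+3}.
Proof.
case/forallPn => k; rewrite negb_imply => /andP[Tk k_not1].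
have [rA /forall_inP good_r] := r_of_spec G A.
have /andP[_ /orP[k_1 | k_m1]] := good_r k Tk; first by rewrite k_1 in k_not1.
have r2A : part2 (r_of G A) %| #|A| := dvdn_trans (dvdn_part 2 _) rA.
move: k_m1 k_not1 r2A; rewrite /part2 p_part mod0n.
case: (logn 2 _) => [|[|l]] k_m1 k_not1 r2A; first by rewrite !modn1 in k_not1.
  by rewrite expn1 !modn2 (inT_odd _ Tk) in k_not1.
have four_r2 : 4 %| 2 ^ l.+2 by rewrite !expnS mulnA dvdn_mulr.
split; first exact: dvdn_trans r2A.
have /andP[_ /exists_inP[g gG /forall_inP conj_g]] := Tk.
exists g => //; exists (k %/ 4) => a aA; apply/eqP.
have -> : (k %/ 4 * 4).+3 = k by move: (dvdn_trans four_r2 k_m1); lia.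
exact: conj_g.
Qed.

Lemma cyclic_normal_conj_expn G A h : A <| G -> cyclic A -> h \in G ->
  exists2 k : 'I_#|A|, inT G A k & {in A, forall a, a ^ h = a ^+ k}.
Proof.
move=> nsAG /cyclicP[y defA] hG.
have hN : h \in 'N(A) := subsetP (normal_norm nsAG) h hG.
have oy : #[y] = #|A| by rewrite defA.
have : y ^ h \in A by rewrite memJ_norm // defA cycle_id.
rewrite {1}defA => /cycleP[s yh].
pose k := s %% #|A|.
have conj_h : {in A, forall a, a ^ h = a ^+ k}.
  move=> a aA; have /cycleP[i ->] : a \in <[y]> by rewrite -defA.
  by rewrite conjXg yh /k -oy [RHS]expgAC expg_mod_order.
have k_lt : k < #|A| by rewrite ltn_pmod ?cardG_gt0.
exists (Ordinal k_lt) => //=; apply/andP; split.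
  have gen_yh : generator <[y]> (y ^ h) by rewrite /generator cycleJ -defA (normP hN).
  by rewrite coprime_sym -oy -generator_coprime -(conj_h y) ?defA ?cycle_id.
by apply/exists_inP; exists h => //; apply/forall_inP => a aA; rewrite conj_h.
Qed.

Lemma epsilon_one_conj_mod4 G A h : A <| G -> cyclic A -> 4 %| #|A| ->
  epsilon_is_one G A -> h \in G ->
  exists q, {in A, forall a, a ^ h = a ^+ (q * 4).+1}.
Proof.
move=> nsAG cycA four_A /forall_inP eps1 hG.
have [k Tk conj_h] := cyclic_normal_conj_expn nsAG cycA hG.
have [rA _] := r_of_spec G A.
have four_r2 : 4 %| part2 (r_of G A).
  by rewrite /part2 -(@part_pnat_id 2 4) // partn_dvd ?dvd4_r_of ?(dvdn_gt0 _ rA).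
have k_1 : k = 1 %[mod 4] by rewrite -(modn_dvdm k four_r2) (eqP (eps1 k Tk)) modn_dvdm.
by exists (k %/ 4) => a aA; rewrite conj_h //; congr (a ^+ _); lia.
Qed.

Lemma commg_cycle_sub_cycleX G y n :
  (forall h, h \in G -> exists q, {in <[y]>, forall b, b ^ h = b ^+ (q * n).+1}) ->
  [~: <[y]>, G] \subset <[y ^+ n]>.
Proof.
move=> conj_G; rewrite gen_subG; apply/subsetP => _ /imset2P[_ h /cycleP[t ->] hG ->].
have [q conj_h] := conj_G h hG.
by rewrite /commg conj_h ?mem_cycle // expgS mulKg -expgM mulnA mulnC expgM mem_cycle.
Qed.

Lemma der1_sub_of_cyclic_quotient G B N : N <| G -> B <| G -> N \subset B ->
  [~: B, G] \subset N -> cyclic (G / B) -> G^`(1) \subset N.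
Proof.
move=> nsNG nsBG sNB sBG_N cycGB; apply: der1_min (normal_norm nsNG) _.
apply: (@cyclic_factor_abelian _ (B / N)).
  by rewrite /center subsetI quotientS ?(normal_sub nsBG) ?quotient_cents2r.
by rewrite (isog_cyclic (third_isog sNB nsNG nsBG)).
Qed.

Lemma epsilon_one_of_kernel_same_order G A B :
  is_kernel G A -> is_kernel G B -> #|A| = #|B| ->
  epsilon_is_one G B -> epsilon_is_one G A.
Proof.
case/and3P=> nsAG /cyclicP[a defA] _ /and3P[nsBG cycB cycGB] eqAB epsB.
apply/negPn/negP => /not_epsilon_one_witness[four_A [g gG [q conj_g]]].
have four_B : 4 %| #|B| by rewrite -eqAB.
have [y defB] := cyclicP cycB.
pose N := <[y ^+ 4]>%G.
have sNB : N \subset B by rewrite defB cycleX.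
have nsNG : N <| G.
  by apply: char_normal_trans nsBG; rewrite defB cycle_subgroup_char ?cycleX.
have sBG_N : [~: B, G] \subset N.
  by rewrite defB; apply: commg_cycle_sub_cycleX => h; rewrite -defB; apply: epsilon_one_conj_mod4.
have aA : a \in A by rewrite defA cycle_id.
have comm_aN : [~ a, g] \in N.
  apply: subsetP (der1_sub_of_cyclic_quotient nsNG nsBG sNB sBG_N cycGB) _ _.
  by rewrite mem_commg // (subsetP (normal_sub nsAG)).
have oy : #[y] = #|B| by rewrite defB.
have oN : #|N| = (#|B| %/ 4)%N by rewrite /= -orderE orderXdiv oy.
move: (order_dvdG comm_aN).
rewrite /commg conj_g // expgS mulKg oN order_dvdn -expgM -order_dvdn.
have -> : #[a] = #|B| by rewrite -eqAB defA.
by rewrite dvdn_mul_quarter ?cardG_gt0 //; lia.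
Qed.

End EpsilonOfKernels.

Theorem lemma3p2 (gT : finGroupType) (G A B : {group gT}) :
  metacyclic G -> is_min_kernel G A -> is_min_kernel G B ->
  epsilonG G A = epsilonG G B.
Proof.
move=> _ [kerA minA] [kerB minB].
have eqAB : #|A| = #|B| by apply/eqP; rewrite eqn_leq minA // minB.
rewrite /epsilonG; congr (if _ then _ else _).
by apply/idP/idP; apply: epsilon_one_of_kernel_same_order.
Qed.
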